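(* Let $\mu<\lambda$ be infinite cardinals with $\mu^{<\mu}=\mu$ and $\lambda$ regular. Then the forcing notion $\mathbb P(\lambda,\mu)$ satisfies the $\mu^+$-chain condition.
   Context: Let $3$ denote the three-element set of symbols $\{\ge,\perp,u\}$. For a set $w$ of ordinals, $[w]^2=\{(i,j): i<j,\ i,j\in w\}$. A valuation function is a map $p:[w]^2\to 3$ such that: (1) if $i<j<k$ in $w$, $p(i,j)={\ge}$ and $p(j,k)={\ge}$, then $p(i,k)={\ge}$; (2) if $i<j<k$ in $w$ and $\{p(i,j),p(i,k)\}=\{\perp,\ge\}$ then $p(j,k)={\perp}$; and if $i<j<k$, $p(i,j)={\perp}$, $p(j,k)={\ge}$, then $p(i,k)={\perp}$. $\mathbb P(\lambda,\mu)$ is the set of valuation functions whose domain is a subset of $\lambda$ of cardinality less than $\mu$, ordered by reverse inclusion. *)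

(* Ordinals/cardinals are modelled as types carrying a strict
   well-order; cardinalities are compared via injections. *)
From Stdlib Require Import Classical.

Set Implicit Arguments.

Definition inj (A B : Type) : Prop :=
  exists f : A -> B, forall x y, f x = f y -> x = y.

Definition strict_wellorder {T : Type} (lt : T -> T -> Prop) : Prop :=
  (forall x, ~ lt x x) /\
  (forall x y z, lt x y -> lt y z -> lt x z) /\
  (forall x y, lt x y \/ x = y \/ lt y x) /\
  well_founded lt.

Definition is_cardinal {T : Type} (lt : T -> T -> Prop) : Prop :=
  forall x, ~ inj T {y | lt y x}.

Definition infinite (T : Type) : Prop := inj nat T.

Definition regular {T : Type} (lt : T -> T -> Prop) : Prop :=
  forall X : T -> Prop, (forall y, exists x, X x /\ ~ lt x y) -> inj T {x | X x}.

(* mu^{<mu} <= mu : the set of all functions alpha -> mu, alpha < mu,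
   has cardinality at most mu (it is always >= mu, so this is mu^{<mu} = mu) *)
Definition pow_lt_eq {T : Type} (lt : T -> T -> Prop) : Prop :=
  inj {a : T & ({y | lt y a} -> T)} T.

Inductive three : Type := Ge | Perp | U.

Definition is_valuation {L : Type} (lt : L -> L -> Prop)
  (w : L -> Prop) (p : L -> L -> three) : Prop :=
  forall i j k, w i -> w j -> w k -> lt i j -> lt j k ->
    (p i j = Ge -> p j k = Ge -> p i k = Ge) /\
    ((p i j = Perp /\ p i k = Ge) \/ (p i j = Ge /\ p i k = Perp) -> p j k = Perp) /\
    (p i j = Perp -> p j k = Ge -> p i k = Perp).

(* a condition: a domain w (subset of lambda) and values on [w]^2 *)
Definition cond (L : Type) : Type := ((L -> Prop) * (L -> L -> three))%type.

Definition in_P {L : Type} (lt : L -> L -> Prop) (M : Type) (c : cond L) : Prop :=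
  is_valuation lt (fst c) (snd c) /\
  inj {x | fst c x} M /\ ~ inj M {x | fst c x}.

(* q <= p (q extends p; reverse inclusion of functions on [dom]^2) *)
Definition ext {L : Type} (lt : L -> L -> Prop) (q p : cond L) : Prop :=
  (forall i, fst p i -> fst q i) /\
  (forall i j, fst p i -> fst p j -> lt i j -> snd q i j = snd p i j).

Definition compatible {L : Type} (lt : L -> L -> Prop) (M : Type) (p q : cond L) : Prop :=
  exists r, in_P lt M r /\ ext lt r p /\ ext lt r q.

Definition mu_plus_cc {L : Type} (lt : L -> L -> Prop) (M : Type) : Prop :=
  forall (I : Type) (f : I -> cond L),
    (forall i, in_P lt M (f i)) ->
    (forall i j, i <> j -> ~ compatible lt M (f i) (f j)) ->
    inj I M.

From Stdlib Require Import Classical ClassicalEpsilon FunctionalExtensionality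
  PropExtensionality Eqdep.

(* Two conditions agreeing on the common part D of their domains are
   compatible: on a pair straddling the two domains put >= or _|_ exactly when
   rules (1)-(3) force it through a point of D, and u otherwise; a case
   analysis on the positions of a triple shows that this is a valuation.

   Using mu^{<mu} = mu and
   the regularity of mu that it implies, build a set C of size mu such that for
   every sequence s of length < mu in C and every condition p of the antichain,
   some condition q of the antichain with domain inside C has the same trace
   (values on pairs from s) as p. Taking for s an enumeration of dom p /\ C,
   q agrees with p on their common domain, so q = p and dom p is inside C.
   A condition with domain in C is then determined, up to compatibility, by
   such a sequence and its trace, and there are only mu of those. *)

Set Implicit Arguments.

Definition seg {T : Type} (lt : T -> T -> Prop) (a : T) : Type := {y | lt y a}.

Definition card_lt (X M : Type) : Prop := inj X M /\ ~ inj M X.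

Definition pow_le (M X : Type) : Prop := inj (X -> M) M.

Definition choose {A : Type} (P : A -> Prop) (H : exists x, P x) : A :=
  proj1_sig (constructive_indefinite_description P H).

Lemma choose_spec {A : Type} (P : A -> Prop) (H : exists x, P x) : P (choose P H).
Proof. unfold choose; destruct constructive_indefinite_description; auto. Qed.

Definition dec (P : Prop) : {P} + {~ P} := excluded_middle_informative P.

Lemma inj_refl (A : Type) : inj A A.
Proof. exists (fun x => x); auto. Qed.

Lemma inj_trans (A B C : Type) : inj A B -> inj B C -> inj A C.
Proof. intros [f Hf] [g Hg]; exists (fun x => g (f x)); auto. Qed.

Lemma inj_sig_sub (T C : Type) (P Q : T -> Prop) :
  (forall x, P x -> Q x) -> inj {x | Q x} C -> inj {x | P x} C.
Proof.
  intros H [f Hf]. exists (fun x => f (exist _ (proj1_sig x) (H _ (proj2_sig x)))).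
  intros [x px] [y py] E. apply Hf in E. injection E as ->.
  f_equal; apply proof_irrelevance.
Qed.

Lemma inj_fun (X A B : Type) : inj A B -> inj (X -> A) (X -> B).
Proof.
  intros [f Hf]. exists (fun g x => f (g x)). intros g h E.
  extensionality x. apply Hf. exact (equal_f E x).
Qed.

Lemma inj_prod (A B C D : Type) : inj A C -> inj B D -> inj (A * B) (C * D).
Proof.
  intros [f Hf] [g Hg]. exists (fun p => (f (fst p), g (snd p))).
  intros [a b] [a' b'] E; injection E; intros; simpl in *. f_equal; auto.
Qed.

Lemma inj_left_inverse (A B : Type) (f : A -> B) (a0 : A) :
  (forall x y, f x = f y -> x = y) -> exists g : B -> A, forall a, g (f a) = a.
Proof.
  intros Hf.
  exists (fun b => match dec (exists a, f a = b) with
                   | left H => choose _ H | right _ => a0 end).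
  intros a. destruct (dec _) as [H|H].
  - apply Hf. exact (choose_spec (fun x => f x = f a) H).
  - exfalso; apply H; exists a; auto.
Qed.

Lemma cantor (M X : Type) (m0 m1 : M) : m0 <> m1 -> pow_le M X -> ~ inj M X.
Proof.
  intros H01 [i Hi] [g Hg].
  destruct (inj_left_inverse i (fun _ => m0) Hi) as [e He].
  destruct (inj_left_inverse g m0 Hg) as [h Hh].
  set (other := fun v : M => if dec (v = m0) then m1 else m0).
  assert (Ho : forall v, other v <> v).
  { intros v; unfold other; destruct (dec _); congruence. }
  set (d := fun x => other (e (h x) x)).
  apply (Ho (d (g (i d)))).
  change (other (d (g (i d))) = other (e (h (g (i d))) (g (i d)))).
  rewrite Hh, He. reflexivity.
Qed.

Lemma pow_le_inj (M X Y : Type) (m0 : M) : inj X Y -> pow_le M Y -> pow_le M X.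
Proof.
  intros [f Hf] [i Hi].
  destruct (classic (exists x : X, True)) as [[x0 _]|HX].
  - destruct (inj_left_inverse f x0 Hf) as [h Hh].
    exists (fun phi => i (fun y => phi (h y))).
    intros phi psi E. apply Hi in E. extensionality x.
    rewrite <- (Hh x). exact (equal_f E (f x)).
  - exists (fun _ => m0). intros phi psi _. extensionality x.
    exfalso; apply HX; exists x; auto.
Qed.

Lemma pow_le_card_lt (M X : Type) (m0 m1 : M) : m0 <> m1 -> pow_le M X -> card_lt X M.
Proof.
  intros H01 HX. split.
  - apply inj_trans with (X -> M); [|exact HX].
    exists (fun x y => if dec (y = x) then m1 else m0).
    intros x y E. pose proof (equal_f E x) as E'; cbv beta in E'.
    destruct (dec (x = x)), (dec (x = y)); congruence.
  - exact (cantor H01 HX).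
Qed.

Lemma pow_le_unit (M : Type) : pow_le M unit.
Proof. exists (fun phi => phi tt). intros f g E. extensionality z; destruct z; auto. Qed.

Section Cardinal_arithmetic.

Variables (M : Type) (ltM : M -> M -> Prop).
Hypothesis woM : strict_wellorder ltM.
Hypothesis cardM : is_cardinal ltM.
Hypothesis infM : infinite M.
Hypothesis powM : pow_lt_eq ltM.

Lemma three_distinct : exists m0 m1 m2 : M, m0 <> m1 /\ m0 <> m2 /\ m1 <> m2.
Proof.
  destruct infM as [e He]. exists (e 0), (e 1), (e 2).
  repeat split; intro E; apply He in E; discriminate.
Qed.

Lemma two_distinct : exists m0 m1 : M, m0 <> m1.
Proof. destruct three_distinct as (m0 & m1 & _ & H & _ & _). eauto. Qed.

Lemma pow_le_seg a : pow_le M (seg ltM a).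
Proof.
  destruct powM as [f Hf]. exists (fun g => f (existT _ a g)).
  intros g h E. apply Hf, inj_pair2 in E. exact E.
Qed.

Lemma seg_card_lt a : card_lt (seg ltM a) M.
Proof.
  split; [|apply cardM].
  exists (@proj1_sig _ _). intros [x hx] [y hy] E; simpl in E; subst.
  f_equal; apply proof_irrelevance.
Qed.

(* Greedy transfinite enumeration of X along M: it either runs through all of
   M, or exhausts X at some stage [a]. *)
Lemma inj_or_inj_seg (X : Type) : inj M X \/ exists a, inj X (seg ltM a).
Proof.
  destruct woM as (_ & _ & Htri & wf).
  destruct two_distinct as (m0 & _ & _).
  destruct (classic (exists x : X, True)) as [[x0 _]|HX].
  2:{ right. exists m0. exists (fun x : X => match HX (ex_intro _ x I) with end).
      intros x; exfalso; apply HX; exists x; auto. }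
  set (fresh := fun (m : M) (rec : forall m', ltM m' m -> X) =>
    epsilon (inhabits x0) (fun x => forall m' (h : ltM m' m), rec m' h <> x)).
  set (G := Fix wf (fun _ => X) fresh).
  assert (HG : forall m, G m = epsilon (inhabits x0) (fun x => forall m', ltM m' m -> G m' <> x)).
  { intros m. unfold G. rewrite Fix_eq; [reflexivity|].
    intros x g h Hgh. unfold fresh. f_equal. extensionality y.
    apply propositional_extensionality; split; intros H m' hm.
    - rewrite <- Hgh; auto.
    - rewrite Hgh; auto. }
  destruct (classic (forall m, exists x, forall m', ltM m' m -> G m' <> x)) as [Hall|Hn].
  - left. exists G.
    assert (Hfresh : forall m m', ltM m' m -> G m' <> G m).
    { intros m m' h. rewrite (HG m).
      apply (epsilon_spec (inhabits x0) (fun x => forall m', ltM m' m -> G m' <> x) (Hall m)).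
      exact h. }
    intros x y E. destruct (Htri x y) as [h|[h|h]]; auto.
    + exfalso; exact (Hfresh y x h E).
    + exfalso; exact (Hfresh x y h (eq_sym E)).
  - right. apply not_all_ex_not in Hn as [m Hm]. exists m.
    assert (Honto : forall x, exists m' : seg ltM m, G (proj1_sig m') = x).
    { intros x. apply NNPP; intros Hx. apply Hm. exists x. intros m' h E.
      apply Hx. exists (exist _ m' h). auto. }
    exists (fun x => choose _ (Honto x)).
    intros x y E. rewrite <- (choose_spec _ (Honto x)), <- (choose_spec _ (Honto y)), E.
    reflexivity.
Qed.

Lemma card_lt_inj_seg (X : Type) : card_lt X M -> exists a, inj X (seg ltM a).
Proof. intros [_ HMX]. destruct (inj_or_inj_seg X); tauto. Qed.

Lemma card_lt_pow_le (X : Type) : card_lt X M -> pow_le M X.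
Proof.
  intros HX. destruct two_distinct as (m0 & _).
  destruct (card_lt_inj_seg HX) as [a Ha].
  exact (pow_le_inj m0 Ha (pow_le_seg a)).
Qed.

Lemma card_lt_inj (X Y : Type) : inj X Y -> card_lt Y M -> card_lt X M.
Proof.
  intros HXY HY. destruct two_distinct as (m0 & m1 & H01).
  exact (pow_le_card_lt H01 (pow_le_inj m0 HXY (card_lt_pow_le HY))).
Qed.

Lemma inj_pair : inj (M * M) M.
Proof.
  destruct three_distinct as (x & y & z & Hxy & Hxz & Hyz).
  destruct woM as (_ & Htr & Htri & _).
  assert (Hbelow : exists a y1 y2, y1 <> y2 /\ ltM y1 a /\ ltM y2 a).
  { assert (exists b c, b <> z /\ c <> z /\ ltM c b) as (b & c & Hbz & Hcz & Hcb).
    { destruct (Htri x y) as [h|[h|h]]; [exists y, x | congruence | exists x, y]; auto. }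
    assert (Hbc : b <> c) by (intros ->; destruct woM; firstorder).
    destruct (Htri b z) as [h|[h|h]]; [exists z, b, c | congruence | exists b, c, z];
      repeat split; eauto. }
  destruct Hbelow as (a & y1 & y2 & H12 & h1 & h2).
  apply inj_trans with (seg ltM a -> M); [|apply pow_le_seg].
  exists (fun p (y : seg ltM a) => if dec (proj1_sig y = y1) then fst p else snd p).
  intros [m n] [m' n'] E.
  pose proof (equal_f E (exist _ y1 h1)) as E1.
  pose proof (equal_f E (exist _ y2 h2)) as E2. simpl in *.
  destruct (dec (y1 = y1)); [|congruence]. destruct (dec (y2 = y1)); [congruence|].
  subst; reflexivity.
Qed.

Lemma pow_le_sum (X Y : Type) : pow_le M X -> pow_le M Y -> pow_le M (X + Y).
Proof.
  intros HX HY. apply inj_trans with (M * M)%type; [|exact inj_pair].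
  apply inj_trans with ((X -> M) * (Y -> M))%type; [|exact (inj_prod HX HY)].
  exists (fun phi => (fun x => phi (inl x), fun y => phi (inr y))).
  intros g h E. injection E as E1 E2. extensionality z. destruct z as [x|y].
  - exact (equal_f E1 x).
  - exact (equal_f E2 y).
Qed.

Lemma card_lt_or {T : Type} {P Q : T -> Prop} :
  card_lt {x | P x} M -> card_lt {x | Q x} M -> card_lt {x | P x \/ Q x} M.
Proof.
  intros HP HQ. destruct two_distinct as (m0 & m1 & H01).
  apply (pow_le_card_lt H01).
  apply (pow_le_inj m0 (Y := ({x | P x} + {x | Q x})%type));
    [|exact (pow_le_sum (card_lt_pow_le HP) (card_lt_pow_le HQ))].
  exists (fun x => match dec (P (proj1_sig x)) with
           | left h => inl (exist _ (proj1_sig x) h)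
           | right h => inr (exist _ (proj1_sig x) (or_ind (fun h' => False_ind _ (h h'))
                                                     (fun h' => h') (proj2_sig x)))
           end).
  intros [x hx] [y hy] E; simpl in E.
  destruct (dec (P x)), (dec (P y)); try discriminate; injection E as ->;
    f_equal; apply proof_irrelevance.
Qed.

Lemma inj_sigma {A : Type} {B : A -> Type} :
  inj A M -> (forall a, inj (B a) M) -> inj {a & B a} M.
Proof.
  intros [f Hf] HB. apply inj_trans with (M * M)%type; [|exact inj_pair].
  set (g := fun a => choose _ (HB a)).
  assert (Hg : forall a x y, g a x = g a y -> x = y) by (intros a; exact (choose_spec _ (HB a))).
  exists (fun s => (f (projT1 s), g (projT1 s) (projT2 s))).
  intros [a x] [a' y] E. injection E as E1 E2. simpl in *.
  apply Hf in E1. subst a'. apply Hg in E2. subst; reflexivity.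
Qed.

Lemma inj_union (T L : Type) (P : L -> Prop) (Q : T -> L -> Prop) :
  (forall x, P x -> exists t, Q t x) -> inj T M ->
  (forall t, inj {x | Q t x} M) -> inj {x | P x} M.
Proof.
  intros HPQ HT HQ.
  apply inj_trans with {t & {x | Q t x}}; [|exact (inj_sigma HT HQ)].
  exists (fun x => existT (fun t => {x | Q t x}) (choose _ (HPQ _ (proj2_sig x)))
                   (exist _ (proj1_sig x) (choose_spec _ (HPQ _ (proj2_sig x))))).
  intros [x hx] [y hy] E.
  apply (f_equal (fun s : {t & {x | Q t x}} => proj1_sig (projT2 s))) in E. simpl in E.
  subst. f_equal; apply proof_irrelevance.
Qed.

Lemma inj_option (X : Type) : inj X M -> inj (option X) M.
Proof.
  intros [g Hg]. destruct two_distinct as (m0 & m1 & H01).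
  apply inj_trans with (M * M)%type; [|exact inj_pair].
  exists (fun o => match o with None => (m0, m0) | Some x => (m1, g x) end).
  intros [x|] [y|] E; try reflexivity; injection E; intros; try congruence.
  f_equal; auto.
Qed.

Lemma inj_three : inj three M.
Proof.
  destruct three_distinct as (m0 & m1 & m2 & H01 & H02 & H12).
  exists (fun t => match t with Ge => m0 | Perp => m1 | U => m2 end).
  intros [] [] E; congruence.
Qed.

(* mu^{<mu} = mu forces mu to be regular: were [g] unbounded, the function [d]
   whose value at x avoids the values at x of all functions coded at most [g x]
   would itself be coded at some [i d] <= [g x]. *)
Lemma card_lt_bounded (X : Type) (g : X -> M) : card_lt X M -> exists b, forall x, ltM (g x) b.
Proof.
  intros HX. apply NNPP; intros Hn.
  assert (Hunb : forall b, exists x, ~ ltM (g x) b).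
  { intros b. apply NNPP; intros Hb. apply Hn. exists b. intros x.
    apply NNPP; intros hx. apply Hb; eauto. }
  destruct (card_lt_pow_le HX) as [i Hi].
  destruct two_distinct as (m0 & m1 & H01).
  destruct woM as (_ & _ & Htri & _).
  assert (Hsmall : forall x, ~ inj M {m | ~ ltM (g x) m}).
  { intros x. apply (cantor H01).
    apply (pow_le_inj m0 (Y := (seg ltM (g x) + unit)%type));
      [|exact (pow_le_sum (pow_le_seg _) (pow_le_unit M))].
    exists (fun m : {m | ~ ltM (g x) m} => match dec (ltM (proj1_sig m) (g x)) with
              | left h => inl (exist _ (proj1_sig m) h)
              | right _ => inr tt end).
    intros [m hm] [m' hm'] E; simpl in E.
    destruct (dec (ltM m (g x))), (dec (ltM m' (g x))); try discriminate.
    - injection E as ->. f_equal; apply proof_irrelevance.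
    - assert (m = g x) by (destruct (Htri m (g x)) as [|[|]]; tauto).
      assert (m' = g x) by (destruct (Htri m' (g x)) as [|[|]]; tauto).
      subst. f_equal; apply proof_irrelevance. }
  assert (Havoid : forall x, exists v, forall phi, ~ ltM (g x) (i phi) -> phi x <> v).
  { intros x. apply NNPP; intros Hx. apply (Hsmall x).
    assert (Hc : forall v, exists phi, ~ ltM (g x) (i phi) /\ phi x = v).
    { intros v. apply NNPP; intros Hv. apply Hx. exists v. intros phi h E. apply Hv; eauto. }
    exists (fun v => exist _ (i (choose _ (Hc v))) (proj1 (choose_spec _ (Hc v)))).
    intros v w E. injection E as E. apply Hi in E.
    rewrite <- (proj2 (choose_spec _ (Hc v))), <- (proj2 (choose_spec _ (Hc w))), E.
    reflexivity. }
  set (d := fun x => choose _ (Havoid x)).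
  destruct (Hunb (i d)) as [x hx].
  exact (choose_spec _ (Havoid x) d hx eq_refl).
Qed.

End Cardinal_arithmetic.

Section Valuation_rules.

Variables (L : Type) (lt : L -> L -> Prop) (w : L -> Prop) (V : L -> L -> three).
Hypothesis HV : is_valuation lt w V.

Lemma val_ge_trans a b c : w a -> w b -> w c -> lt a b -> lt b c ->
  V a b = Ge -> V b c = Ge -> V a c = Ge.
Proof. intros ha hb hc hab hbc. apply (HV ha hb hc hab hbc). Qed.

Lemma val_perp_of_perp_ge a b c : w a -> w b -> w c -> lt a b -> lt b c ->
  V a b = Perp -> V a c = Ge -> V b c = Perp.
Proof. intros ha hb hc hab hbc e1 e2. apply (HV ha hb hc hab hbc); auto. Qed.

Lemma val_perp_of_ge_perp a b c : w a -> w b -> w c -> lt a b -> lt b c ->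
  V a b = Ge -> V a c = Perp -> V b c = Perp.
Proof. intros ha hb hc hab hbc e1 e2. apply (HV ha hb hc hab hbc); auto. Qed.

Lemma val_perp_ge_trans a b c : w a -> w b -> w c -> lt a b -> lt b c ->
  V a b = Perp -> V b c = Ge -> V a c = Perp.
Proof. intros ha hb hc hab hbc. apply (HV ha hb hc hab hbc). Qed.

End Valuation_rules.

Lemma valuation_sub (L : Type) (lt : L -> L -> Prop) (w w' : L -> Prop) (V V' : L -> L -> three) :
  is_valuation lt w V -> (forall x, w' x -> w x) ->
  (forall x y, w' x -> w' y -> lt x y -> V' x y = V x y) ->
  (forall x y z, lt x y -> lt y z -> lt x z) -> is_valuation lt w' V'.
Proof.
  intros HV Hw HV' Htr i j k hi hj hk hij hjk.
  rewrite (HV' i j), (HV' j k), (HV' i k) by eauto.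
  exact (HV i j k (Hw _ hi) (Hw _ hj) (Hw _ hk) hij hjk).
Qed.

Definition valuation_at {L : Type} (V : L -> L -> three) (i j k : L) : Prop :=
  (V i j = Ge -> V j k = Ge -> V i k = Ge) /\
  ((V i j = Perp /\ V i k = Ge) \/ (V i j = Ge /\ V i k = Perp) -> V j k = Perp) /\
  (V i j = Perp -> V j k = Ge -> V i k = Perp).

Section Amalgamation.

Variables (L : Type) (lt : L -> L -> Prop).
Hypothesis lt_trans : forall x y z, lt x y -> lt y z -> lt x z.
Hypothesis lt_total : forall x y, lt x y \/ x = y \/ lt y x.
Variable V : L -> L -> three.
Variable D : L -> Prop.

(* The values forced on a pair (x, y) by rules (1)-(3) through a point of D. *)
Definition ge_through x y :=
  exists d, D d /\ lt x d /\ lt d y /\ V x d = Ge /\ V d y = Ge.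
Definition perp_through x y :=
  (exists d, D d /\ lt x d /\ lt d y /\ V x d = Perp /\ V d y = Ge) \/
  (exists d, D d /\ lt d x /\
     ((V d x = Perp /\ V d y = Ge) \/ (V d x = Ge /\ V d y = Perp))).
Definition forced x y :=
  if dec (ge_through x y) then Ge else if dec (perp_through x y) then Perp else U.

Definition straddles (A B : L -> Prop) x y := (A x /\ B y) \/ (B x /\ A y).
Definition amalgam (A B : L -> Prop) x y := if dec (straddles A B x y) then forced x y else V x y.

Lemma amalgam_sym A B : amalgam A B = amalgam B A.
Proof.
  extensionality x; extensionality y. unfold amalgam, straddles.
  destruct (dec _), (dec _); tauto.
Qed.

Lemma amalgam_straddles A B x y : straddles A B x y -> amalgam A B x y = forced x y.
Proof. unfold amalgam; destruct (dec _); tauto. Qed.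

Lemma amalgam_inside A B x y : ~ straddles A B x y -> amalgam A B x y = V x y.
Proof. unfold amalgam; destruct (dec _); tauto. Qed.

Lemma forced_ge x y : forced x y = Ge <-> ge_through x y.
Proof.
  unfold forced; destruct (dec _); [tauto|].
  destruct (dec _); split; intros; try discriminate; tauto.
Qed.

Lemma forced_perp x y : forced x y = Perp -> perp_through x y.
Proof. unfold forced; destruct (dec _); [discriminate|]. destruct (dec _); [auto|discriminate]. Qed.

Lemma forced_perp_intro x y : ~ ge_through x y -> perp_through x y -> forced x y = Perp.
Proof. unfold forced; destruct (dec _); [tauto|]. destruct (dec _); tauto. Qed.

Ltac in_dom := first [ left; assumption | right; assumption ].
Ltac by_rule HV R a b c :=
  eapply (R _ _ _ _ HV a b c);
    [in_dom | in_dom | in_dom | solve [eauto] | solve [eauto] | assumption | assumption].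

Lemma through_exclusive (P Q : L -> Prop) x y :
  is_valuation lt (fun x => P x \/ D x) V -> is_valuation lt (fun x => Q x \/ D x) V ->
  P x -> Q y -> lt x y -> ge_through x y -> perp_through x y -> False.
Proof.
  intros HP HQ hx hy hxy [d (hd & h1 & h2 & e1 & e2)]
    [[d' (hd' & h1' & h2' & e1' & e2')]|[d' (hd' & h1' & [[e1' e2']|[e1' e2']])]].
  - destruct (lt_total d d') as [h|[h|h]].
    + assert (V d d' = Perp) by by_rule HP val_perp_of_ge_perp x d d'.
      assert (V d y = Perp) by by_rule HQ val_perp_ge_trans d d' y. congruence.
    + subst; congruence.
    + assert (V d' d = Perp) by by_rule HP val_perp_of_perp_ge x d' d.
      assert (V d' y = Perp) by by_rule HQ val_perp_ge_trans d' d y. congruence.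
  - assert (V d' d = Perp) by by_rule HP val_perp_ge_trans d' x d.
    assert (V d y = Perp) by by_rule HQ val_perp_of_perp_ge d' d y. congruence.
  - assert (V d' d = Ge) by by_rule HP val_ge_trans d' x d.
    assert (V d y = Perp) by by_rule HQ val_perp_of_ge_perp d' d y. congruence.
Qed.

Variables A B : L -> Prop.
Hypothesis disj_AB : forall x, A x -> B x -> False.
Hypothesis disj_AD : forall x, A x -> D x -> False.
Hypothesis disj_BD : forall x, B x -> D x -> False.
Hypothesis HA : is_valuation lt (fun x => A x \/ D x) V.
Hypothesis HB : is_valuation lt (fun x => B x \/ D x) V.

Lemma forced_perp_AB x y : A x -> B y -> lt x y -> perp_through x y -> forced x y = Perp.
Proof. intros; apply forced_perp_intro; auto. intro; eapply (through_exclusive A B); eauto. Qed.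

Lemma forced_perp_BA x y : B x -> A y -> lt x y -> perp_through x y -> forced x y = Perp.
Proof. intros; apply forced_perp_intro; auto. intro; eapply (through_exclusive B A); eauto. Qed.

Ltac rA R a b c := by_rule HA R a b c.
Ltac rB R a b c := by_rule HB R a b c.
Ltac inside := unfold straddles; intros [[? ?]|[? ?]]; eauto.
Ltac across := unfold straddles; first [left; split; assumption | right; split; assumption].
Ltac fin := repeat split; try assumption; try solve [eauto];
  try (left; split; assumption); try (right; split; assumption).
Ltac ge_wit := match goal with H : forced _ _ = Ge |- _ =>
  apply forced_ge in H as [?d (?hd & ?h1 & ?h2 & ?e3 & ?e4)] end.
Ltac perp_wit := match goal with H : forced _ _ = Perp |- _ =>
  apply forced_perp in H as
    [[?d (?hd & ?h1 & ?h2 & ?e3 & ?e4)]|[?d (?hd & ?h1 & [[?e3 ?e4]|[?e3 ?e4]])]] end.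
Ltac perp_intro := first [ apply forced_perp_AB; [assumption|assumption|solve [eauto]|]
                         | apply forced_perp_BA; [assumption|assumption|solve [eauto]|] ];
                   unfold perp_through.

Lemma amalgam_at_AAB i j k : A i -> A j -> B k -> lt i j -> lt j k ->
  valuation_at (amalgam A B) i j k.
Proof.
  intros hi hj hk hij hjk. unfold valuation_at.
  rewrite (@amalgam_inside A B i j) by inside.
  rewrite (@amalgam_straddles A B i k) by across.
  rewrite (@amalgam_straddles A B j k) by across.
  split; [|split].
  - intros e1 e2. ge_wit. apply forced_ge. exists d.
    assert (V i d = Ge) by rA val_ge_trans i j d. fin.
  - intros [[e1 e2]|[e1 e2]].
    + ge_wit. perp_intro. destruct (lt_total d j) as [h|[h|h]].
      * assert (V d j = Perp) by rA val_perp_of_ge_perp i d j. right; exists d; fin.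
      * subst; exfalso; eauto.
      * assert (V j d = Perp) by rA val_perp_of_perp_ge i j d. left; exists d; fin.
    + perp_wit; perp_intro.
      * destruct (lt_total d j) as [h|[h|h]].
        -- assert (V d j = Perp) by rA val_perp_of_perp_ge i d j. right; exists d; fin.
        -- subst; exfalso; eauto.
        -- assert (V j d = Perp) by rA val_perp_of_ge_perp i j d. left; exists d; fin.
      * assert (V d j = Perp) by rA val_perp_ge_trans d i j. right; exists d; fin.
      * assert (V d j = Ge) by rA val_ge_trans d i j. right; exists d; fin.
  - intros e1 e2. ge_wit. perp_intro.
    assert (V i d = Perp) by rA val_perp_ge_trans i j d. left; exists d; fin.
Qed.

Lemma amalgam_at_ABA i j k : A i -> B j -> A k -> lt i j -> lt j k ->
  valuation_at (amalgam A B) i j k.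
Proof.
  intros hi hj hk hij hjk. unfold valuation_at.
  rewrite (@amalgam_inside A B i k) by inside.
  rewrite (@amalgam_straddles A B i j) by across.
  rewrite (@amalgam_straddles A B j k) by across.
  split; [|split].
  - intros e1 e2. ge_wit. ge_wit.
    assert (V d0 d = Ge) by rB val_ge_trans d0 j d.
    assert (V i d = Ge) by rA val_ge_trans i d0 d.
    rA val_ge_trans i d k.
  - intros [[e1 e2]|[e1 e2]].
    + perp_wit; perp_intro.
      * assert (V d k = Perp) by rA val_perp_of_perp_ge i d k. right; exists d; fin.
      * assert (V d k = Perp) by rA val_perp_ge_trans d i k. right; exists d; fin.
      * assert (V d k = Ge) by rA val_ge_trans d i k. right; exists d; fin.
    + ge_wit; perp_intro.
      assert (V d k = Perp) by rA val_perp_of_ge_perp i d k. right; exists d; fin.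
  - intros e1 e2. ge_wit. perp_wit.
    + assert (V d0 d = Ge) by rB val_ge_trans d0 j d.
      assert (V i d = Perp) by rA val_perp_ge_trans i d0 d.
      rA val_perp_ge_trans i d k.
    + assert (V d0 d = Ge) by rB val_ge_trans d0 j d.
      assert (V i d = Perp) by rA val_perp_of_perp_ge d0 i d.
      rA val_perp_ge_trans i d k.
    + assert (V d0 d = Perp) by rB val_perp_ge_trans d0 j d.
      assert (V i d = Perp) by rA val_perp_of_ge_perp d0 i d.
      rA val_perp_ge_trans i d k.
Qed.

Lemma amalgam_at_BAA i j k : B i -> A j -> A k -> lt i j -> lt j k ->
  valuation_at (amalgam A B) i j k.
Proof.
  intros hi hj hk hij hjk. unfold valuation_at.
  rewrite (@amalgam_inside A B j k) by inside.
  rewrite (@amalgam_straddles A B i j) by across.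
  rewrite (@amalgam_straddles A B i k) by across.
  split; [|split].
  - intros e1 e2. ge_wit. apply forced_ge. exists d.
    assert (V d k = Ge) by rA val_ge_trans d j k. fin.
  - intros [[e1 e2]|[e1 e2]].
    + ge_wit. perp_wit.
      * destruct (lt_total d0 d) as [h|[h|h]].
        -- assert (V d0 d = Perp) by rB val_perp_of_perp_ge i d0 d.
           assert (V d0 k = Perp) by rA val_perp_ge_trans d0 d k.
           rA val_perp_of_ge_perp d0 j k.
        -- subst; congruence.
        -- assert (V d d0 = Perp) by rB val_perp_of_ge_perp i d d0.
           assert (V d j = Perp) by rA val_perp_ge_trans d d0 j.
           rA val_perp_of_perp_ge d j k.
      * assert (V d0 d = Perp) by rB val_perp_ge_trans d0 i d.
        assert (V d0 k = Perp) by rA val_perp_ge_trans d0 d k.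
        rA val_perp_of_ge_perp d0 j k.
      * assert (V d0 d = Ge) by rB val_ge_trans d0 i d.
        assert (V d0 k = Ge) by rA val_ge_trans d0 d k.
        rA val_perp_of_perp_ge d0 j k.
    + ge_wit. perp_wit.
      * destruct (lt_total d d0) as [h|[h|h]].
        -- assert (V d d0 = Perp) by rB val_perp_of_ge_perp i d d0.
           assert (V d k = Perp) by rA val_perp_ge_trans d d0 k.
           rA val_perp_of_ge_perp d j k.
        -- subst; congruence.
        -- assert (V d0 d = Perp) by rB val_perp_of_perp_ge i d0 d.
           assert (V d0 j = Perp) by rA val_perp_ge_trans d0 d j.
           rA val_perp_of_perp_ge d0 j k.
      * assert (V d0 d = Perp) by rB val_perp_ge_trans d0 i d.
        assert (V d0 j = Perp) by rA val_perp_ge_trans d0 d j.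
        rA val_perp_of_perp_ge d0 j k.
      * assert (V d0 d = Ge) by rB val_ge_trans d0 i d.
        assert (V d0 j = Ge) by rA val_ge_trans d0 d j.
        rA val_perp_of_ge_perp d0 j k.
  - intros e1 e2. perp_wit; perp_intro.
    + assert (V d k = Ge) by rA val_ge_trans d j k. left; exists d; fin.
    + assert (V d k = Ge) by rA val_ge_trans d j k. right; exists d; fin.
    + assert (V d k = Perp) by rA val_perp_ge_trans d j k. right; exists d; fin.
Qed.

Lemma amalgam_at_ABD i j k : A i -> B j -> D k -> lt i j -> lt j k ->
  valuation_at (amalgam A B) i j k.
Proof.
  intros hi hj hk hij hjk. unfold valuation_at.
  rewrite (@amalgam_inside A B i k) by inside.
  rewrite (@amalgam_inside A B j k) by inside.
  rewrite (@amalgam_straddles A B i j) by across.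
  split; [|split].
  - intros e1 e2. ge_wit.
    assert (V d k = Ge) by rB val_ge_trans d j k. rA val_ge_trans i d k.
  - intros [[e1 e2]|[e1 e2]].
    + perp_wit.
      * assert (V d k = Perp) by rA val_perp_of_perp_ge i d k. rB val_perp_of_ge_perp d j k.
      * assert (V d k = Perp) by rA val_perp_ge_trans d i k. rB val_perp_of_ge_perp d j k.
      * assert (V d k = Ge) by rA val_ge_trans d i k. rB val_perp_of_perp_ge d j k.
    + ge_wit. assert (V d k = Perp) by rA val_perp_of_ge_perp i d k. rB val_perp_of_ge_perp d j k.
  - intros e1 e2. perp_wit.
    + assert (V d k = Ge) by rB val_ge_trans d j k. rA val_perp_ge_trans i d k.
    + assert (V d k = Ge) by rB val_ge_trans d j k. rA val_perp_of_perp_ge d i k.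
    + assert (V d k = Perp) by rB val_perp_ge_trans d j k. rA val_perp_of_ge_perp d i k.
Qed.

Lemma amalgam_at_ADB i j k : A i -> D j -> B k -> lt i j -> lt j k ->
  valuation_at (amalgam A B) i j k.
Proof.
  intros hi hj hk hij hjk. unfold valuation_at.
  rewrite (@amalgam_inside A B i j) by inside.
  rewrite (@amalgam_inside A B j k) by inside.
  rewrite (@amalgam_straddles A B i k) by across.
  split; [|split].
  - intros e1 e2. apply forced_ge. exists j. fin.
  - intros [[e1 e2]|[e1 e2]].
    + ge_wit. destruct (lt_total d j) as [h|[h|h]].
      * assert (V d j = Perp) by rA val_perp_of_ge_perp i d j. rB val_perp_of_perp_ge d j k.
      * subst; congruence.
      * assert (V j d = Perp) by rA val_perp_of_perp_ge i j d. rB val_perp_ge_trans j d k.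
    + perp_wit.
      * destruct (lt_total d j) as [h|[h|h]].
        -- assert (V d j = Perp) by rA val_perp_of_perp_ge i d j. rB val_perp_of_perp_ge d j k.
        -- subst; congruence.
        -- assert (V j d = Perp) by rA val_perp_of_ge_perp i j d. rB val_perp_ge_trans j d k.
      * assert (V d j = Perp) by rA val_perp_ge_trans d i j. rB val_perp_of_perp_ge d j k.
      * assert (V d j = Ge) by rA val_ge_trans d i j. rB val_perp_of_ge_perp d j k.
  - intros e1 e2. perp_intro. left; exists j; fin.
Qed.

Lemma amalgam_at_DAB i j k : D i -> A j -> B k -> lt i j -> lt j k ->
  valuation_at (amalgam A B) i j k.
Proof.
  intros hi hj hk hij hjk. unfold valuation_at.
  rewrite (@amalgam_inside A B i j) by inside.
  rewrite (@amalgam_inside A B i k) by inside.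
  rewrite (@amalgam_straddles A B j k) by across.
  split; [|split].
  - intros e1 e2. ge_wit.
    assert (V i d = Ge) by rA val_ge_trans i j d. rB val_ge_trans i d k.
  - intros [[e1 e2]|[e1 e2]]; perp_intro; right; exists i; fin.
  - intros e1 e2. ge_wit.
    assert (V i d = Perp) by rA val_perp_ge_trans i j d. rB val_perp_ge_trans i d k.
Qed.

End Amalgamation.

Ltac amalgam_case :=
  solve [ eapply amalgam_at_AAB; eauto | eapply amalgam_at_ABA; eauto
        | eapply amalgam_at_BAA; eauto | eapply amalgam_at_ABD; eauto
        | eapply amalgam_at_ADB; eauto | eapply amalgam_at_DAB; eauto ].

(* A single function [V] for both valuations encodes their agreement on [D]. *)
Lemma amalgam_valuation (L : Type) (lt : L -> L -> Prop)
  (lt_trans : forall x y z, lt x y -> lt y z -> lt x z)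
  (lt_total : forall x y, lt x y \/ x = y \/ lt y x)
  (V : L -> L -> three) (D A B : L -> Prop)
  (disj_AB : forall x, A x -> B x -> False)
  (disj_AD : forall x, A x -> D x -> False)
  (disj_BD : forall x, B x -> D x -> False)
  (HA : is_valuation lt (fun x => A x \/ D x) V)
  (HB : is_valuation lt (fun x => B x \/ D x) V) :
  is_valuation lt (fun x => A x \/ D x \/ B x) (amalgam lt V D A B).
Proof.
  intros i j k hi hj hk hij hjk. change (valuation_at (amalgam lt V D A B) i j k).
  assert (disj_BA : forall x, B x -> A x -> False) by eauto.
  destruct hi as [hi|[hi|hi]], hj as [hj|[hj|hj]], hk as [hk|[hk|hk]];
    first [ amalgam_case
          | rewrite amalgam_sym; amalgam_case
          | unfold valuation_at;
            rewrite !amalgam_inside by (unfold straddles; intros [[? ?]|[? ?]]; eauto);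
            solve [apply HA; auto | apply HB; auto] ].
Qed.

Section Chain_condition.

Variables (M : Type) (ltM : M -> M -> Prop).
Hypothesis woM : strict_wellorder ltM.
Hypothesis cardM : is_cardinal ltM.
Hypothesis infM : infinite M.
Hypothesis powM : pow_lt_eq ltM.

Variables (L : Type) (ltL : L -> L -> Prop).
Hypothesis ltL_trans : forall x y z, ltL x y -> ltL y z -> ltL x z.
Hypothesis ltL_total : forall x y, ltL x y \/ x = y \/ ltL y x.

Lemma compatible_of_agree (p q : cond L) : in_P ltL M p -> in_P ltL M q ->
  (forall x y, fst p x -> fst q x -> fst p y -> fst q y -> ltL x y -> snd p x y = snd q x y) ->
  compatible ltL M p q.
Proof.
  destruct p as [P vp], q as [Q vq]; simpl.
  intros [Hvp HP] [Hvq HQ] Hagree; simpl in *.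
  set (A := fun x => P x /\ ~ Q x).
  set (B := fun x => Q x /\ ~ P x).
  set (D := fun x => P x /\ Q x).
  set (V := fun x y => if dec (P x /\ P y) then vp x y else vq x y).
  assert (HA : is_valuation ltL (fun x => A x \/ D x) V).
  { eapply valuation_sub; [exact Hvp | | | exact ltL_trans].
    - unfold A, D; intros x [[? ?]|[? ?]]; auto.
    - unfold A, D, V; intros x y hx hy _. destruct (dec _) as [|n]; auto.
      exfalso; apply n.
      split; [destruct hx as [[? ?]|[? ?]] | destruct hy as [[? ?]|[? ?]]]; auto. }
  assert (HB : is_valuation ltL (fun x => B x \/ D x) V).
  { eapply valuation_sub; [exact Hvq | | | exact ltL_trans].
    - unfold B, D; intros x [[? ?]|[? ?]]; auto.
    - unfold B, D, V; intros x y hx hy hxy. destruct (dec _) as [[h1 h2]|]; auto.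
      apply Hagree; auto;
        [destruct hx as [[? ?]|[? ?]] | destruct hy as [[? ?]|[? ?]]]; auto. }
  assert (Hamalgam : is_valuation ltL (fun x => A x \/ D x \/ B x) (amalgam ltL V D A B))
    by (apply amalgam_valuation; auto; unfold A, B, D; tauto).
  exists (fun x => P x \/ Q x, amalgam ltL V D A B). split; [split|split; split]; simpl.
  - eapply valuation_sub; [exact Hamalgam | | | exact ltL_trans].
    + unfold A, B, D; intros x; tauto.
    + reflexivity.
  - exact (card_lt_or woM infM powM HP HQ).
  - intros x hx; left; exact hx.
  - intros x y hx hy _. rewrite amalgam_inside by (unfold straddles, A, B; tauto).
    unfold V. destruct (dec _); tauto.
  - intros x hx; right; exact hx.
  - intros x y hx hy hxy. rewrite amalgam_inside by (unfold straddles, A, B; tauto).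
    unfold V. destruct (dec _) as [[h1 h2]|]; auto.
Qed.

Definition code : Type := {a : M & seg ltM a -> L}.

Definition code_in (C : L -> Prop) (k : code) : Prop := forall y, C (projT2 k y).

Definition code_on (C : L -> Prop) : Type := {k : code | code_in C k}.

Definition covers (k : code) (S : L -> Prop) : Prop := forall x, S x -> exists y, projT2 k y = x.

(* Values of [snd p] off the domain of [p] are junk; they only make traces finer. *)
Definition trace (p : cond L) (k : code) : seg ltM (projT1 k) -> seg ltM (projT1 k) -> three :=
  fun y z => snd p (projT2 k y) (projT2 k z).

Lemma inj_code_on (C : L -> Prop) : inj {x | C x} M -> inj (code_on C) M.
Proof.
  intros [g Hg]. apply inj_trans with {a : M & seg ltM a -> M}; [|exact powM].
  exists (fun k : code_on C => existT (fun a => seg ltM a -> M) (projT1 (proj1_sig k))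
                   (fun y => g (exist _ (projT2 (proj1_sig k) y) (proj2_sig k y)))).
  intros [[a h] hh] [[a' h'] hh'] E; simpl in E.
  assert (a = a') as <- by exact (f_equal (@projT1 _ _) E).
  apply inj_pair2 in E.
  assert (h = h') as <-.
  { extensionality y. apply (f_equal (fun F => F y)), Hg in E. injection E as E. exact E. }
  f_equal; apply proof_irrelevance.
Qed.

Lemma inj_trace (a : M) : inj (seg ltM a -> seg ltM a -> three) M.
Proof.
  apply inj_trans with (seg ltM a -> seg ltM a -> M);
    [exact (inj_fun _ (inj_fun _ (inj_three infM)))|].
  apply inj_trans with (seg ltM a -> M); [exact (inj_fun _ (pow_le_seg powM a))|].
  exact (pow_le_seg powM a).
Qed.

Lemma code_cover {C S : L -> Prop} {c0 : L} : C c0 -> card_lt {x | S x} M ->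
  (forall x, S x -> C x) -> exists k, code_in C k /\ covers k S.
Proof.
  intros hc0 HS HSC.
  destruct (card_lt_inj_seg woM infM HS) as [a [g Hg]].
  set (h := fun y : seg ltM a => match dec (exists s, g s = y) with
             | left H => proj1_sig (choose _ H) | right _ => c0 end).
  exists (existT _ a h). split.
  - intros y; simpl; unfold h. destruct (dec _) as [H|]; auto. apply HSC, proj2_sig.
  - intros x hx. exists (g (exist _ x hx)). simpl; unfold h. destruct (dec _) as [H|H].
    + rewrite (Hg _ _ (choose_spec _ H)). reflexivity.
    + exfalso; apply H; eauto.
Qed.

Section Antichain.

Variables (I : Type) (f : I -> cond L).
Hypothesis f_in_P : forall i, in_P ltL M (f i).
Hypothesis f_antichain : forall i j, i <> j -> ~ compatible ltL M (f i) (f j).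
(* An arbitrary point of lambda, padding sequences and seeding the closure. *)
Variable l0 : L.

Lemma antichain_eq_of_trace_eq i j (k : code) : trace (f i) k = trace (f j) k ->
  covers k (fun x => fst (f i) x /\ fst (f j) x) -> i = j.
Proof.
  intros E Hk. apply NNPP; intros Hij. apply (f_antichain Hij).
  apply compatible_of_agree; auto.
  intros x y hxi hxj hyi hyj _.
  destruct (Hk x (conj hxi hxj)) as [u <-], (Hk y (conj hyi hyj)) as [v <-].
  exact (equal_f (equal_f E u) v).
Qed.

Definition realized (k : code) : Type := {t | exists i, trace (f i) k = t}.

Definition realizer (k : code) (t : realized k) : I := choose _ (proj2_sig t).

Definition traced_code (C : L -> Prop) : Type := {k : code_on C & realized (proj1_sig k)}.

Definition extend (C : L -> Prop) (x : L) : Prop :=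
  C x \/ exists s : traced_code C, fst (f (realizer (projT2 s))) x.

Lemma extend_size (C : L -> Prop) : inj {x | C x} M -> inj {x | extend C x} M.
Proof.
  intros HC.
  apply (inj_union woM infM powM)
    with (T := option (traced_code C))
         (Q := fun (o : option (traced_code C)) x =>
                 match o with None => C x | Some s => fst (f (realizer (projT2 s))) x end).
  - intros x [h|[s h]]; [exists None | exists (Some s)]; exact h.
  - apply (inj_option woM infM powM), (inj_sigma woM infM powM); [exact (inj_code_on C HC)|].
    intros [k hk]. apply inj_trans with (seg ltM (projT1 k) -> seg ltM (projT1 k) -> three);
      [|apply inj_trace].
    exists (@proj1_sig _ _). intros [t ht] [t' ht'] E; simpl in E; subst.
    f_equal; apply proof_irrelevance.
  - intros [s|]; [apply (proj1 (proj2 (f_in_P _))) | exact HC].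
Qed.

Lemma extend_reflects (C : L -> Prop) (k : code) : code_in C k -> forall i,
  exists j, trace (f j) k = trace (f i) k /\ forall x, fst (f j) x -> extend C x.
Proof.
  intros hk i.
  set (t := exist (fun t => exists i, trace (f i) k = t) (trace (f i) k) (ex_intro _ i eq_refl)).
  exists (realizer t). split.
  - exact (choose_spec _ (proj2_sig t)).
  - intros x hx. right. exists (existT _ (exist _ k hk) t : traced_code C). exact hx.
Qed.

Let ltM_wf : well_founded ltM := proj2 (proj2 (proj2 woM)).

Definition stage_step (xi : M) (rec : forall eta, ltM eta xi -> L -> Prop) : L -> Prop :=
  extend (fun x => x = l0 \/ exists eta (h : ltM eta xi), rec eta h x).

Definition stage : M -> L -> Prop := Fix ltM_wf (fun _ => L -> Prop) stage_step.

Definition below (xi : M) (x : L) : Prop := x = l0 \/ exists eta (_ : ltM eta xi), stage eta x.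

Lemma stage_eq xi : stage xi = extend (below xi).
Proof.
  unfold stage at 1. rewrite Fix_eq; [reflexivity|].
  intros x g h Hgh. replace g with h; [reflexivity|].
  extensionality y. extensionality p. symmetry; apply Hgh.
Qed.

Lemma stage_size xi : inj {x | stage xi x} M.
Proof.
  induction xi as [xi IH] using (well_founded_ind ltM_wf).
  rewrite stage_eq. apply extend_size.
  apply (inj_union woM infM powM) with (T := option (seg ltM xi))
    (Q := fun o x => match o with None => x = l0 | Some e => stage (proj1_sig e) x end).
  - intros x [h|(eta & h & hx)]; [exists None | exists (Some (exist _ eta h))]; exact hx || exact h.
  - apply (inj_option woM infM powM), (seg_card_lt cardM).
  - intros [[eta h]|]; simpl; [exact (IH eta h)|].
    destruct (two_distinct infM) as (m0 & _). exists (fun _ => m0).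
    intros [x hx] [y hy] _. subst. reflexivity.
Qed.

Definition closure (x : L) : Prop := exists xi, stage xi x.

Lemma closure_size : inj {x | closure x} M.
Proof.
  apply (inj_union woM infM powM) with (T := M) (Q := stage);
    [auto | apply inj_refl | apply stage_size].
Qed.

Lemma closure_l0 : closure l0.
Proof.
  destruct (two_distinct infM) as (m0 & _). exists m0.
  rewrite stage_eq. left; left; reflexivity.
Qed.

(* A sequence of length < mu in the closure lies below a single stage, by the
   regularity of mu. *)
Lemma closure_reflects (k : code) : code_in closure k -> forall i,
  exists j, trace (f j) k = trace (f i) k /\ forall x, fst (f j) x -> closure x.
Proof.
  intros hk i.
  set (height := fun y => choose _ (hk y)).
  destruct (card_lt_bounded woM infM powM height (seg_card_lt cardM _)) as [bnd Hbnd].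
  assert (hk' : code_in (below bnd) k).
  { intros y. right. exists (height y), (Hbnd y). exact (choose_spec _ (hk y)). }
  destruct (extend_reflects hk' i) as (j & Hj & Hdom).
  exists j. split; [exact Hj|]. intros x hx. exists bnd. rewrite stage_eq. exact (Hdom x hx).
Qed.

Lemma dom_in_closure b x : fst (f b) x -> closure x.
Proof.
  set (S := fun x => fst (f b) x /\ closure x).
  assert (HS : card_lt {x | S x} M).
  { apply (card_lt_inj woM infM powM) with {x | fst (f b) x}; [|exact (proj2 (f_in_P b))].
    apply (inj_sig_sub S (fst (f b))); [unfold S; tauto | apply inj_refl]. }
  destruct (code_cover closure_l0 HS (fun x hx => proj2 hx)) as (k & hk & Hcov).
  destruct (closure_reflects hk b) as (j & Hj & Hdom).
  assert (j = b) as <-.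
  { apply (antichain_eq_of_trace_eq Hj).
    intros y [hyj hyb]. apply Hcov. split; auto. }
  apply Hdom.
Qed.

Lemma antichain_inj : inj I M.
Proof.
  assert (Hcode : forall b, exists k, code_in closure k /\ covers k (fst (f b))).
  { intros b. apply (code_cover closure_l0 (proj2 (f_in_P b))). apply dom_in_closure. }
  set (kb := fun b =>
    exist (code_in closure) (choose _ (Hcode b)) (proj1 (choose_spec _ (Hcode b)))).
  set (Tr := fun k : code_on closure =>
    seg ltM (projT1 (proj1_sig k)) -> seg ltM (projT1 (proj1_sig k)) -> three).
  apply inj_trans with {k : code_on closure & Tr k}.
  - exists (fun b => existT Tr (kb b) (trace (f b) (proj1_sig (kb b)))).
    intros b c E.
    assert (kb b = kb c) as Ek by exact (f_equal (@projT1 _ _) E).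
    rewrite <- Ek in E. apply inj_pair2 in E.
    apply (antichain_eq_of_trace_eq E).
    intros x [hb _]. exact (proj2 (choose_spec _ (Hcode b)) x hb).
  - apply (inj_sigma woM infM powM); [exact (inj_code_on _ closure_size) | intros; apply inj_trace].
Qed.

End Antichain.

End Chain_condition.

Theorem proposition4p5 (L : Type) (ltL : L -> L -> Prop)
  (M : Type) (ltM : M -> M -> Prop) :
  strict_wellorder ltL -> is_cardinal ltL -> infinite L -> regular ltL ->
  strict_wellorder ltM -> is_cardinal ltM -> infinite M ->
  inj M L -> ~ inj L M ->
  pow_lt_eq ltM ->
  mu_plus_cc ltL M.
Proof.
  intros (_ & ltL_trans & ltL_total & _) _ _ _ woM cardM infM [g _] _ powM I f f_in_P f_antichain.
  destruct infM as [e He].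
  exact (antichain_inj woM cardM (ex_intro _ e He) powM ltL_trans ltL_total
           f f_in_P f_antichain (g (e 0))).
Qed.
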